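(* Let $a$ be the unique positive root of $\frac{1-\ln a}{a}=\frac1e$ and $\psi_a(x)=1-(1-x)a^x$. Then for all $0<y\le1$, \[ \frac1y\,\psi_a\Big(\frac{y\,e^{1-y}}{2\,(1-y)^{1-y}}\Big)\le1. \]
   Context: Convention: $0^0=1$. *)

From Stdlib Require Import Reals.
Open Scope R_scope.

(* Real power x^y for x >= 0, with the convention 0^0 = 1 (and 0^y = 0 for y <> 0). *)
Definition rpow (x y : R) : R :=
  if Req_EM_T x 0 then (if Req_EM_T y 0 then 1 else 0) else Rpower x y.

Definition psi (a x : R) : R := 1 - (1 - x) * rpow a x.

(** Write [a = exp L].  The root equation says [1 - L = exp (L - 1)], which forces
    [43/100 <= L], and [psi a x = 1 - (1 - x) exp (x L)] with
    [exp (x L) >= (1 + x L / 2)^2].  The argument [x] of [psi] is [y E(y) / 2] with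
    [E(y) = exp ((1 - y) - (1 - y) ln (1 - y))] decreasing in [y], so on each of eight
    subintervals of [(0, 1)] a rational constant [c >= E / 2] reduces the claim to
    the cubic inequality [1 - y <= (1 - c y) (1 + 43/200 c y)^2].  The numerical
    bounds on [exp] are certified by exact rational computation. *)

From Stdlib Require Import Reals Lra QArith Qreals Qround.
Open Scope R_scope.

Lemma exp_le_exp x y : x <= y -> exp x <= exp y.
Proof.
  intros h; destruct (Rle_lt_or_eq_dec _ _ h) as [hlt | ->].
  - left; apply exp_increasing, hlt.
  - apply Rle_refl.
Qed.

Lemma le_ln_of_exp_le q s : 0 < s -> exp q <= s -> q <= ln s.
Proof.
  intros hs hq; destruct (Rle_or_lt q (ln s)) as [h | h]; [exact h |].
  apply exp_increasing in h; rewrite exp_ln in h; lra.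
Qed.

Lemma exp_le_inv_one_sub x : x < 1 -> exp x <= / (1 - x).
Proof.
  intros hx.
  rewrite <- (Rinv_inv (exp x)), <- exp_Ropp.
  apply Rinv_le_contravar; [lra |].
  pose proof (exp_ineq1_le (- x)); lra.
Qed.

Lemma sqr_one_add_half_le_exp t : 0 <= t -> (1 + t / 2) ^ 2 <= exp t.
Proof.
  intros ht.
  replace t with (t / 2 + t / 2) at 2 by field; rewrite exp_plus.
  pose proof (exp_ineq1_le (t / 2)); nra.
Qed.

Lemma ln_le_sub_one w : 0 < w -> ln w <= w - 1.
Proof. intros hw; pose proof (exp_ineq1_le (ln w)); rewrite exp_ln in *; lra. Qed.

(** [exp x = exp (x / 2^k) ^ (2^k)] with [exp t <= 1 / (1 - t)]; rounding up to
    denominator [10^9] after each squaring keeps the rationals small. *)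

Definition Qround_up (r : Q) : Q := (Qceiling (r * 1000000000) # 1000000000)%Q.

Fixpoint exp_ub (k : nat) (x : Q) : option Q :=
  match k with
  | O => match (x ?= 1)%Q with Lt => Some (/ (1 - x))%Q | _ => None end
  | S k => option_map (fun u => Qround_up (u * u)) (exp_ub k (x / 2))
  end.

Definition exp_le_check (x b : Q) : bool :=
  match exp_ub 13 x with Some u => Qle_bool u b | None => false end.

Lemma Q2R_Qround_up_ge r : Q2R r <= Q2R (Qround_up r).
Proof.
  pose proof (Qle_Rle _ _ (Qle_ceiling (r * 1000000000))) as h.
  rewrite Q2R_mult in h; unfold Qround_up, inject_Z, Q2R in *; cbn [Qnum Qden] in *.
  lra.
Qed.

Lemma exp_ub_sound k x u : exp_ub k x = Some u -> exp (Q2R x) <= Q2R u.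
Proof.
  revert x u; induction k as [| k IH]; intros x u hu; cbn in hu.
  - destruct (x ?= 1)%Q eqn:hx; try discriminate.
    injection hu as <-.
    apply Qlt_alt, Qlt_Rlt in hx.
    assert (h1 : Q2R 1 = 1) by (unfold Q2R; cbn; lra).
    rewrite Q2R_inv, Q2R_minus, h1.
    + apply exp_le_inv_one_sub; lra.
    + intros h0; apply Qeq_eqR in h0; rewrite Q2R_minus, h1 in h0.
      unfold Q2R in h0 at 2; cbn in h0; lra.
  - destruct (exp_ub k (x / 2)) as [v |] eqn:hv; [| discriminate].
    injection hu as <-.
    apply IH in hv.
    rewrite Q2R_div in hv by discriminate.
    assert (h2 : Q2R 2 = 2) by (unfold Q2R; cbn; lra).
    rewrite h2 in hv.
    eapply Rle_trans; [| apply Q2R_Qround_up_ge].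
    rewrite Q2R_mult.
    replace (Q2R x) with (Q2R x / 2 + Q2R x / 2) by field; rewrite exp_plus.
    pose proof (exp_pos (Q2R x / 2)); nra.
Qed.

Lemma exp_le_of_check x b : exp_le_check x b = true -> exp (Q2R x) <= Q2R b.
Proof.
  unfold exp_le_check; destruct (exp_ub 13 x) as [u |] eqn:hu; [| discriminate].
  intros hb; apply Qle_bool_iff, Qle_Rle in hb.
  eapply Rle_trans; [apply (exp_ub_sound _ _ _ hu) | exact hb].
Qed.

Ltac unfold_Q2R := unfold Q2R in *; cbn [Qnum Qden] in *.

(** [exp (ent (1 - y)) = e^(1 - y) / (1 - y)^(1 - y)]. *)

Definition ent (s : R) : R := s - s * ln s.

Lemma ent_le s t : 0 < s <= t -> t <= 1 -> ent s <= ent t.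
Proof.
  intros hs ht; unfold ent.
  assert (hts : ln t = ln (t / s) + ln s).
  { rewrite <- ln_mult by (try apply Rdiv_lt_0_compat; lra). f_equal; field; lra. }
  pose proof (ln_le_sub_one (t / s) ltac:(apply Rdiv_lt_0_compat; lra)).
  pose proof (ln_le_sub_one t ltac:(lra)).
  assert (s * (ln t - ln s) <= t - s).
  { replace (t - s) with (s * (t / s - 1)) by (field; lra).
    apply Rmult_le_compat_l; lra. }
  nra.
Qed.

Lemma exp_ent_le s s1 q : 0 < s <= s1 -> s1 <= 1 -> exp q <= s1 ->
  exp (ent s) <= exp (s1 * (1 - q)).
Proof.
  intros hs hs1 hq; apply exp_le_exp.
  pose proof (le_ln_of_exp_le q s1 ltac:(lra) hq).
  apply Rle_trans with (ent s1); [apply ent_le; lra |].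
  unfold ent; nra.
Qed.

Lemma one_sub_mul_sqr_antitone k x X : 0 <= k <= 1 / 2 -> 0 <= x <= X -> X <= 1 ->
  (1 - X) * (1 + k * X) ^ 2 <= (1 - x) * (1 + k * x) ^ 2.
Proof.
  intros hk hx hX.
  assert (0 <= (X - x) * (k * (X + x))) by (apply Rmult_le_pos; nra).
  assert (0 <= (X - x) * (k * k * (x * x + x * X + X * X))) by (apply Rmult_le_pos; nra).
  nra.
Qed.

Lemma psi_le_poly a X Y : 0 < a -> 43 / 100 <= ln a -> 0 <= X <= Y -> Y <= 1 ->
  psi a X <= 1 - (1 - Y) * (1 + 43 / 200 * Y) ^ 2.
Proof.
  intros ha hL hX hY.
  unfold psi, rpow; destruct (Req_EM_T a 0) as [| _]; [lra |]; unfold Rpower.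
  pose proof (one_sub_mul_sqr_antitone (43 / 200) X Y ltac:(lra) hX hY).
  assert (0 <= X * (ln a - 43 / 100)) by (apply Rmult_le_pos; lra).
  assert ((1 + 43 / 200 * X) ^ 2 <= (1 + X * ln a / 2) ^ 2) by nra.
  pose proof (sqr_one_add_half_le_exp (X * ln a) ltac:(nra)).
  nra.
Qed.

(** [interval_cert y1 y2 c q] certifies [exp q <= 1 - y1], hence
    [E(y) <= exp ((1 - y1) (1 - q)) <= 2 c] for [y1 <= y]. *)

Definition interval_cert (y1 y2 c q : Q) : bool :=
  Qle_bool 0 y1 && Qle_bool (c * y2) 1 &&
  exp_le_check q (1 - y1) && exp_le_check ((1 - y1) * (1 - q)) (2 * c).

Lemma psi_le_on_interval (y1 y2 c q : Q) a y :
  interval_cert y1 y2 c q = true ->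
  (forall z, Q2R y1 <= z <= Q2R y2 ->
     1 - z <= (1 - Q2R c * z) * (1 + 43 / 200 * (Q2R c * z)) ^ 2) ->
  Q2R y1 <= y <= Q2R y2 -> 0 < y < 1 -> 0 < a -> 43 / 100 <= ln a ->
  psi a (y * exp (ent (1 - y)) / 2) <= y.
Proof.
  unfold interval_cert; intros hcert hpoly hy hy01 ha hL.
  apply andb_prop in hcert as [hcert hE]; apply andb_prop in hcert as [hcert hq];
    apply andb_prop in hcert as [hy1 hcy].
  apply Qle_bool_iff, Qle_Rle in hy1, hcy.
  apply exp_le_of_check in hq, hE.
  rewrite Q2R_minus in hq; rewrite Q2R_mult, !Q2R_minus, Q2R_mult in hE;
    rewrite Q2R_mult in hcy.
  assert (h1 : Q2R 1 = 1) by (unfold_Q2R; lra).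
  assert (h2 : Q2R 2 = 2) by (unfold_Q2R; lra).
  assert (h0 : Q2R 0 = 0) by (unfold_Q2R; lra).
  rewrite h1 in hq, hE, hcy; rewrite h2 in hE; rewrite h0 in hy1.
  pose proof (exp_pos (Q2R q)).
  pose proof (exp_ent_le (1 - y) (1 - Q2R y1) (Q2R q) ltac:(lra) ltac:(lra) hq).
  pose proof (exp_pos (ent (1 - y))).
  set (E := exp (ent (1 - y))) in *.
  assert (hE2 : E <= 2 * Q2R c) by lra.
  assert (hX : 0 <= y * E / 2 <= Q2R c * y) by (split; nra).
  eapply Rle_trans; [apply (psi_le_poly a _ (Q2R c * y)); auto; nra |].
  pose proof (hpoly y hy); nra.
Qed.

Ltac on_interval y1 y2 c q :=
  apply (psi_le_on_interval y1 y2 c q);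
  [ vm_compute; reflexivity | intros z hz; unfold_Q2R; nra | unfold_Q2R; lra | .. ];
  assumption.

Lemma psi_le_self a y : 0 < a -> 43 / 100 <= ln a -> 0 < y < 1 ->
  psi a (y * exp (ent (1 - y)) / 2) <= y.
Proof.
  intros ha hL hy.
  destruct (Rle_or_lt y (29/100)). { on_interval (0#1) (29#100) (681#500) (0#1). }
  destruct (Rle_or_lt y (37/100)). { on_interval (29#100) (37#100) (13#10) (-43#125). }
  destruct (Rle_or_lt y (43/100)). { on_interval (37#100) (43#100) (63#50) (-58#125). }
  destruct (Rle_or_lt y (47/100)). { on_interval (43#100) (47#100) (123#100) (-141#250). }
  destruct (Rle_or_lt y (52/100)). { on_interval (47#100) (13#25) (6#5) (-159#250). }
  destruct (Rle_or_lt y (6/10)). { on_interval (13#25) (3#5) (29#25) (-147#200). }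
  destruct (Rle_or_lt y (77/100)). { on_interval (3#5) (77#100) (27#25) (-459#500). }
  on_interval (77#100) (1#1) (89#100) (-1471#1000).
Qed.

Lemma ln_ge_of_root a : 0 < a -> (1 - ln a) / a = 1 / exp 1 -> 43 / 100 <= ln a.
Proof.
  intros ha hroot.
  assert (hL : 1 - ln a = exp (ln a - 1)).
  { unfold Rminus at 2; rewrite exp_plus, exp_Ropp, exp_ln by exact ha.
    apply (f_equal (fun t => t * a)) in hroot.
    replace ((1 - ln a) / a * a) with (1 - ln a) in hroot by (field; lra).
    pose proof (exp_pos 1). rewrite hroot; field; lra. }
  pose proof (exp_le_of_check (-57 # 100) (566 # 1000) ltac:(vm_compute; reflexivity)) as he.
  unfold_Q2R.
  destruct (Rle_or_lt (43 / 100) (ln a)) as [h | h]; [exact h |].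
  pose proof (exp_increasing (ln a - 1) (-57 * / 100) ltac:(lra)); lra.
Qed.

Lemma psi_arg_eq y : 0 < y < 1 ->
  y * exp (1 - y) / (2 * rpow (1 - y) (1 - y)) = y * exp (ent (1 - y)) / 2.
Proof.
  intros hy; unfold rpow, Rpower, ent.
  destruct (Req_EM_T (1 - y) 0); [lra |].
  replace (1 - y - (1 - y) * ln (1 - y)) with (1 - y + - ((1 - y) * ln (1 - y))) by ring.
  rewrite exp_plus, exp_Ropp; field; apply Rgt_not_eq, exp_pos.
Qed.

Theorem lemma5p8 (a : R) (ha : 0 < a) (hroot : (1 - ln a) / a = 1 / exp 1)
  (huniq : forall b : R, 0 < b -> (1 - ln b) / b = 1 / exp 1 -> b = a) :
  forall y : R, 0 < y <= 1 ->
    (1 / y) * psi a (y * exp (1 - y) / (2 * rpow (1 - y) (1 - y))) <= 1.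
Proof.
  intros y [hy0 hy1].
  pose proof (ln_ge_of_root a ha hroot) as hL.
  assert (hpsi : psi a (y * exp (1 - y) / (2 * rpow (1 - y) (1 - y))) <= y).
  { destruct (Req_dec y 1) as [-> | hy].
    - replace (1 - 1) with 0 by ring.
      assert (hx : 1 * exp 0 / (2 * rpow 0 0) = 1 / 2).
      { unfold rpow; destruct (Req_EM_T 0 0); [rewrite exp_0; field | lra]. }
      rewrite hx; eapply Rle_trans; [apply (psi_le_poly a (1 / 2) (1 / 2)); lra | nra].
    - rewrite psi_arg_eq by lra; apply psi_le_self; auto; lra. }
  apply (Rmult_le_compat_l (1 / y)) in hpsi; [| apply Rlt_le, Rdiv_lt_0_compat; lra].
  replace (1 / y * y) with 1 in hpsi by (field; lra); exact hpsi.
Qed.
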